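(* Let $G$ be a finite group, let $K$ be a normal solvable subgroup of $G$, and let $p \in \pi(G)$. If $d_G(p) < |L(p,G)|$, then $p \notin \pi(K)$.
   Context: For a finite group $X$, $\pi(X)$ is the set of prime divisors of $|X|$. The prime graph $GK(G)$ of $G$ has vertex set $\pi(G)$, with distinct vertices $p,q$ adjacent iff $G$ contains an element of order $pq$; $d_G(p)$ denotes the degree of the vertex $p$ in $GK(G)$. For $p \in \pi(G)$, $w_G(p) = \max\{ i : p^i \mid |G|\}$. For a positive integer $m$, $[m] = \operatorname{lcm}(1,2,\dots,m)$. For $p\in\pi(G)$, define $$L(p,G) = \{ q \in \pi(G)\setminus\{p\} \;:\; p \nmid q^{n}-1 \text{ and } q \nmid p^{\gcd([m],\,q-1)}-1, \text{ where } m = w_G(p),\ n = w_G(q)\}.$$ *)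

From mathcomp Require Import all_boot all_fingroup all_solvable.
Set Implicit Arguments. Unset Strict Implicit. Unset Printing Implicit Defensive.
Import GroupScope.

Definition lcm_upto (m : nat) : nat := \big[lcmn/1%N]_(1 <= i < m.+1) i.

Section PrimeGraph.
Variable gT : finGroupType.

Definition wG (G : {group gT}) (p : nat) : nat := logn p #|G|.

Definition gk_adj (G : {group gT}) (p q : nat) : bool :=
  (p != q) && [exists x in G, #[x] == (p * q)%N].

Definition gk_deg (G : {group gT}) (p : nat) : nat :=
  size [seq q <- primes #|G| | gk_adj G p q].

Definition Lset (G : {group gT}) (p : nat) : seq nat :=
  [seq q <- primes #|G| |
     (q != p) &&
     ~~ (p %| q ^ wG G q - 1) &&
     ~~ (q %| p ^ gcdn (lcm_upto (wG G p)) (q - 1) - 1)].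

End PrimeGraph.

From mathcomp Require Import all_boot all_fingroup all_solvable.
Import GroupScope.

Set Implicit Arguments.
Unset Strict Implicit.
Unset Printing Implicit Defensive.

(* Every q in L(p,G) is adjacent to p in GK(G), so |L(p,G)| <= d_G(p) as soon
   as p divides |K|.  Put M = O_p'(K), a normal subgroup of G.  If q divides
   |G/M|, an element y of order q in G/M acts on N = O_p(K/M), which is
   nontrivial because K/M is solvable with trivial p'-core; as |N| = p^j with
   j <= w_G(p), q does not divide |N| - 1, so y centralizes an element a of
   order p, and a preimage of ay yields an element of order pq in G.  If q does
   not divide |G/M|, a Sylow q-subgroup Q of M has order q^(w_G(q)), and by the
   Frattini argument N_G(Q) contains an element of order p; since p does not
   divide |Q| - 1 it centralizes an element of order q.  The condition on
   gcd([w_G(p)], q-1) is exactly what rules out q | p^j - 1 for 1 <= j <= w_G(p). *)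

Section PowersModPrime.
Local Open Scope nat_scope.

Lemma lcm_upto_gt0 m : 0 < lcm_upto m.
Proof.
elim: m => [|m IHm]; first by rewrite /lcm_upto big_geq.
by rewrite /lcm_upto big_nat_recr //= -/(lcm_upto m) lcmn_gt0 IHm.
Qed.

Lemma dvdn_lcm_upto k m : 0 < k <= m -> k %| lcm_upto m.
Proof.
elim: m => [|m IHm] /andP[k_gt0 le_km]; first by case: k k_gt0 le_km.
rewrite /lcm_upto big_nat_recr //= -/(lcm_upto m).
case: ltngtP le_km => // [lt_km _ | -> _]; last exact: dvdn_lcmr.
by apply: dvdn_trans (dvdn_lcml _ _); rewrite IHm ?k_gt0.
Qed.

Lemma dvdn_expn_sub1 p q k : 0 < p -> (q %| p ^ k - 1) = (p ^ k == 1 %[mod q]).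
Proof. by move=> p_gt0; rewrite eqn_mod_dvd // expn_gt0 p_gt0. Qed.

Lemma expn_mod1_mul p q a c : p ^ a = 1 %[mod q] -> p ^ (a * c) = 1 %[mod q].
Proof. by move=> pa1; rewrite expnM -modnXm pa1 modnXm exp1n. Qed.

Lemma expn_mod1_gcd p q a b : 0 < a ->
  p ^ a = 1 %[mod q] -> p ^ b = 1 %[mod q] -> p ^ gcdn a b = 1 %[mod q].
Proof.
move=> a_gt0 pa1 pb1; have [c _ /dvdnP[d def_da]] := Bezoutl b a_gt0.
have pcb1 : p ^ (c * b) = 1 %[mod q] by rewrite mulnC expn_mod1_mul.
have pda1 : p ^ (d * a) = 1 %[mod q] by rewrite mulnC expn_mod1_mul.
have := congr1 (modn^~ q) (congr1 (expn p) def_da).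
by rewrite /= expnD -modnMmr pcb1 modnMmr muln1 pda1.
Qed.

(* The order of p modulo q divides both [m] and q - 1. *)
Lemma dvdn_expn_gcd_lcm_upto p q k m : prime q -> coprime p q -> 0 < k <= m ->
  q %| p ^ k - 1 -> q %| p ^ gcdn (lcm_upto m) (q - 1) - 1.
Proof.
move=> q_pr co_pq le_km.
have p_gt0 : 0 < p.
  by case: p co_pq => //; rewrite /coprime gcd0n => /eqP q1; rewrite q1 in q_pr.
rewrite !dvdn_expn_sub1 // => /eqP pk1; apply/eqP.
apply: expn_mod1_gcd; first exact: lcm_upto_gt0.
  have /dvdnP[c ->] : k %| lcm_upto m by exact: dvdn_lcm_upto.
  by rewrite mulnC expn_mod1_mul.
by rewrite subn1 -totient_prime // Euler_exp_totient // coprime_sym.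
Qed.

End PowersModPrime.

Lemma exists_expg_order (gT : finGroupType) (g : gT) n :
  (n %| #[g])%N -> exists k, #[g ^+ k] = n.
Proof.
case/dvdnP=> c def_g; have : (0 < c * n)%N by rewrite -def_g.
rewrite muln_gt0 => /andP[c_gt0 n_gt0].
by exists c; rewrite orderXdiv def_g ?mulKn ?dvdn_mulr.
Qed.

Lemma quotient_order_lift (gT : finGroupType) (G M : {group gT}) (xb : coset_of M) n :
  xb \in G / M -> #[xb] = n -> exists2 h, h \in G & #[h] = n.
Proof.
case/morphimP=> g Ng Gg -> og; have := morph_order (coset_morphism M) Ng.
rewrite /= og => /exists_expg_order[k ogk].
by exists (g ^+ k); rewrite ?groupX.
Qed.

(* Counting fixed points of <[y]> on N modulo s. *)
Lemma pgroup_cent_elt (gT : finGroupType) (N : {group gT}) (y : gT) r s :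
  prime r -> prime s -> r.-group N -> N :!=: 1 -> y \in 'N(N) -> s.-elt y ->
  ~~ (s %| #|N| - 1)%N -> exists2 a, a \in N & #[a] = r /\ commute a y.
Proof.
move=> r_pr s_pr rN ntN nNy s_y not_s_N1.
have act_y : [acts <[y]>, on N | 'J] by rewrite astabsJ cycle_subG.
have N_mod := pgroup_fix_mod s_y act_y; rewrite afixJ in N_mod.
have ntC : 'C_N(<[y]>) :!=: 1.
  apply: contra not_s_N1 => /eqP C1.
  by rewrite -eqn_mod_dvd ?cardG_gt0 // N_mod C1 cards1.
have [_ r_C _] := pgroup_pdiv (pgroupS (subsetIl _ _) rN) ntC.
have [a /setIP[Na /centP cay] oa] := Cauchy r_pr r_C.
by exists a => //; split; last exact: cay (cycle_id y).
Qed.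

Lemma pcore_quotient_pcore'_neq1 (gT : finGroupType) (K : {group gT}) p :
  prime p -> solvable K -> (p %| #|K|)%N -> 'O_p(K / 'O_p^'(K)) != 1.
Proof.
move=> p_pr solK pK.
rewrite -(Fitting_eq_pcore (trivg_pcore_quotient _ _)) trivg_Fitting ?quotient_sol //.
rewrite -subG1 quotient_sub1 ?normal_norm ?pcore_normal //.
apply: contraL pK => /(pgroupS)/(_ (pcore_pgroup _ _)) /pgroupP p'K.
by apply/negP => /p'K; rewrite !inE eqxx => /(_ p_pr).
Qed.

Section AdjacentPrimes.
Variables (gT : finGroupType) (G K : {group gT}) (p q : nat).
Hypotheses (nKG : K <| G) (solK : solvable K).
Hypotheses (p_pr : prime p) (q_pr : prime q) (neq_pq : p != q).
Hypotheses (p_K : (p %| #|K|)%N) (q_G : (q %| #|G|)%N).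
Hypothesis not_p_qw : ~~ (p %| q ^ wG G q - 1)%N.
Hypothesis not_q_pk : forall k, (0 < k <= wG G p)%N -> ~~ (q %| p ^ k - 1)%N.

Local Notation M := 'O_p^'(K).

Lemma coprime_pq : coprime p q.
Proof. by rewrite prime_coprime // dvdn_prime2. Qed.

Lemma order_pq_through_quotient :
  (q %| #|G / M|)%N -> exists2 x, x \in G & #[x] = (p * q)%N.
Proof.
move=> q_GM; have [yb Gyb oyb] := Cauchy q_pr q_GM.
set N := 'O_p(K / M).
have nNG : N <| G / M := char_normal_trans (pcore_char _ _) (quotient_normal _ nKG).
have pN : p.-group N := pcore_pgroup _ _.
have ntN : N != 1 := pcore_quotient_pcore'_neq1 p_pr solK p_K.
have not_q_N1 : ~~ (q %| #|N| - 1)%N.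
  have [_ _ [j oN]] := pgroup_pdiv pN ntN.
  rewrite oN not_q_pk //= /wG -pfactor_dvdn // -oN.
  apply: dvdn_trans (cardSg (pcore_sub _ _)) _.
  exact: dvdn_trans (dvdn_quotient _ _) (cardSg (normal_sub nKG)).
have q_yb : q.-elt yb by rewrite /p_elt oyb pnat_id.
have nNyb := subsetP (normal_norm nNG) _ Gyb.
have [a Na [oa cayb]] := pgroup_cent_elt p_pr q_pr pN ntN nNyb q_yb not_q_N1.
apply: (@quotient_order_lift _ G M (a * yb)).
  by rewrite groupM // (subsetP (normal_sub nNG)).
by rewrite orderM ?oa ?oyb ?coprime_pq.
Qed.

Lemma order_pq_through_Sylow :
  ~~ (q %| #|G / M|)%N -> exists2 x, x \in G & #[x] = (p * q)%N.
Proof.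
move=> not_q_GM; have nMG : M <| G := char_normal_trans (pcore_char _ _) nKG.
have not_p_M : ~~ (p %| #|M|)%N.
  by apply/negP => /(pgroupP (pcore_pgroup _ _) p p_pr); rewrite !inE eqxx.
have [Q sylQ] := Sylow_exists q M.
have qQ : q.-group Q := pHall_pgroup sylQ.
have oQ : #|Q| = (q ^ wG G q)%N.
  rewrite (card_Hall sylQ) p_part /wG -(Lagrange (normal_sub nMG)).
  rewrite -card_quotient ?normal_norm // lognM ?cardG_gt0 //.
  by rewrite [logn q #|_ / _|]logn_coprime ?addn0 // prime_coprime.
have ntQ : Q :!=: 1.
  rewrite -cardG_gt1 oQ -{1}(expn0 q) ltn_exp2l ?prime_gt1 // logn_gt0.
  by rewrite mem_primes q_pr cardG_gt0.
have p_NGQ : (p %| #|'N_G(Q)|)%N.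
  have := mul_cardG M 'N_G(Q); rewrite (Frattini_arg nMG sylQ) => MN_G.
  have : (p %| #|M| * #|'N_G(Q)|)%N.
    by rewrite MN_G dvdn_mulr // (dvdn_trans p_K) ?cardSg ?normal_sub.
  by rewrite Euclid_dvdM // (negbTE not_p_M).
have [x /setIP[Gx nQx] ox] := Cauchy p_pr p_NGQ.
have p_x : p.-elt x by rewrite /p_elt ox pnat_id.
have not_p_Q1 : ~~ (p %| #|Q| - 1)%N by rewrite oQ.
have [a Qa [oa cax]] := pgroup_cent_elt q_pr p_pr qQ ntQ nQx p_x not_p_Q1.
have Ga : a \in G.
  exact: subsetP (normal_sub nMG) a (subsetP (pHall_sub sylQ) a Qa).
exists (a * x); first exact: groupM.
by rewrite orderM ?oa ?ox 1?mulnC // coprime_sym coprime_pq.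
Qed.

Lemma exists_order_pq : exists2 x, x \in G & #[x] = (p * q)%N.
Proof.
by case: (boolP (q %| #|G / M|)%N); [exact: order_pq_through_quotient
                                  | exact: order_pq_through_Sylow].
Qed.

End AdjacentPrimes.

Lemma gk_adj_Lset (gT : finGroupType) (G K : {group gT}) p q :
  K <| G -> solvable K -> p \in primes #|K| -> q \in Lset G p -> gk_adj G p q.
Proof.
move=> nKG solK; rewrite mem_primes => /and3P[p_pr _ p_K].
rewrite mem_filter mem_primes.
case/andP=> /andP[/andP[neq_qp not_p_qw] not_q_gcd] /and3P[q_pr _ q_G].
have neq_pq : p != q by rewrite eq_sym.
have not_q_pk k : (0 < k <= wG G p)%N -> ~~ (q %| p ^ k - 1)%N.
  move=> le_kw; apply: contra not_q_gcd; apply: dvdn_expn_gcd_lcm_upto le_kw => //.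
  exact: coprime_pq.
have [x Gx ox] :=
  exists_order_pq nKG solK p_pr q_pr neq_pq p_K q_G not_p_qw not_q_pk.
by rewrite /gk_adj neq_pq; apply/existsP; exists x; rewrite Gx ox eqxx.
Qed.

Theorem theorem2p7 (gT : finGroupType) (G K : {group gT}) (p : nat) :
  K <| G -> solvable K -> p \in primes #|G| ->
  gk_deg G p < size (Lset G p) ->
  p \notin primes #|K|.
Proof.
move=> nKG solK _ lt_deg_L; apply/negP => p_K.
have : subseq (Lset G p) [seq q <- primes #|G| | gk_adj G p q].
  rewrite subseq_filter filter_subseq andbT.
  by apply/allP => q; apply: gk_adj_Lset p_K.
by move/size_subseq; rewrite leqNgt lt_deg_L.
Qed.
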